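(* Let $F$ be a set-system (not assumed uniform). The following are equivalent: (1) $F$ is an HKE set-system; (2) for every two non-empty disjoint subfamilies $\Gamma_1,\Gamma_2\subseteq F$, $$\Big|\bigcap\Gamma_1-\bigcup\Gamma_2\Big|=\Big|\bigcap\Gamma_2-\bigcup\Gamma_1\Big|;$$ (3) the equality in (2) holds for every two non-empty disjoint subfamilies $\Gamma_1,\Gamma_2\subseteq F$ with $\Gamma_1\cup\Gamma_2=F$.
   Context: A set-system is a family of sets; throughout, set-systems are non-empty finite families of finite non-empty sets. A set-system $F$ is a hereditary König–Egerváry (HKE) set-system if there is a positive integer $\alpha$ such that $|\bigcup\Gamma|+|\bigcap\Gamma|=2\alpha$ for every non-empty subfamily $\Gamma\subseteq F$. $X-Y$ denotes set difference. *)

From mathcomp Require Import all_boot.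
Set Implicit Arguments. Unset Strict Implicit. Unset Printing Implicit Defensive.

Definition bigU (T : finType) (G : {set {set T}}) : {set T} := \bigcup_(A in G) A.
Definition bigI (T : finType) (G : {set {set T}}) : {set T} := \bigcap_(A in G) A.

Definition set_system (T : finType) (F : {set {set T}}) : Prop :=
  F != set0 /\ set0 \notin F.

Definition HKE (T : finType) (F : {set {set T}}) : Prop :=
  exists alpha : nat, 0 < alpha /\
    forall G : {set {set T}}, G \subset F -> G != set0 ->
      #|bigU G| + #|bigI G| = 2 * alpha.

From mathcomp Require Import all_boot zify.
Set Implicit Arguments. Unset Strict Implicit. Unset Printing Implicit Defensive.

(* Write N(P, Q) = |/\P - \/Q| and f(G) = |\/G| + |/\G|.  Counting the
   elements of A and of the members of G shows
     f(A + G) + N(G, {A}) = f(G) + N({A}, G)        (A not in G),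
   so f is constant on the non-empty subfamilies exactly when N is symmetric
   on pairs ({A}, G).  Sorting the elements of N(P, Q) by membership in A gives
     N(P, Q) = N(A + P, Q) + N(P, A + Q),
   so of the three pairs (P, Q), (A + P, Q), (P, A + Q) any two on which N is
   symmetric force the third; induction then moves symmetry from singletons
   to arbitrary pairs, and from covering pairs to arbitrary ones. *)

Lemma finset_ind (T : finType) (P : {set T} -> Prop) :
  P set0 -> (forall x (A : {set T}), x \notin A -> P A -> P (x |: A)) -> forall A, P A.
Proof.
move=> P0 PU A; elim: {A}_.+1 {-2}A (ltnSn #|A|) => // n IH A.
case: (set_0Vmem A) => [-> // | [x xA]] ltA; rewrite -(setD1K xA).
apply: PU; first by rewrite setD11.
by apply: IH; rewrite (cardsD1 x A) xA in ltA.
Qed.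

Section Exclusive.
Variable T : finType.
Implicit Types (A : {set T}) (G P Q : {set {set T}}).

Definition exclusive P Q := #|bigI P :\: bigU Q|.

Definition cupcap G := #|bigU G| + #|bigI G|.

Lemma setU1_neq0 A G : A |: G != set0.
Proof. by apply/set0Pn; exists A; rewrite setU11. Qed.

Lemma set1_neq0 A : [set A] != set0.
Proof. by apply/set0Pn; exists A; rewrite set11. Qed.

Lemma bigU_setU1 A G : A \notin G -> bigU (A |: G) = A :|: bigU G.
Proof. by move=> AnG; rewrite /bigU big_setU1. Qed.

Lemma bigI_setU1 A G : A \notin G -> bigI (A |: G) = A :&: bigI G.
Proof. by move=> AnG; rewrite /bigI big_setU1. Qed.

Lemma bigU_set1 A : bigU [set A] = A. Proof. by rewrite /bigU big_set1. Qed.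

Lemma bigI_set1 A : bigI [set A] = A. Proof. by rewrite /bigI big_set1. Qed.

Lemma cupcap_set1 A : cupcap [set A] = 2 * #|A|.
Proof. by rewrite /cupcap bigU_set1 bigI_set1 mul2n addnn. Qed.

Lemma exclusive_split A P Q : A \notin P -> A \notin Q ->
  exclusive P Q = exclusive (A |: P) Q + exclusive P (A |: Q).
Proof.
move=> AnP AnQ; rewrite /exclusive bigI_setU1 // bigU_setU1 //.
rewrite -(cardsID A (bigI P :\: bigU Q)); congr (_ + _); apply: eq_card => x;
  by rewrite !inE; case: (x \in A); case: (x \in bigI P); case: (x \in bigU Q).
Qed.

Lemma cupcap_setU1 A G : A \notin G ->
  cupcap (A |: G) + exclusive G [set A] = cupcap G + exclusive [set A] G.
Proof.
move=> AnG; rewrite /cupcap /exclusive bigU_setU1 // bigI_setU1 // bigU_set1 bigI_set1.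
have := cardsUI A (bigU G); have := cardsID (bigU G) A; have := cardsID A (bigI G).
by rewrite (setIC A (bigI G)); lia.
Qed.

Lemma exclusive_sym_merge A G1 G2 : A \notin G1 -> A \notin G2 ->
  exclusive (A |: G1) G2 = exclusive G2 (A |: G1) ->
  exclusive G1 (A |: G2) = exclusive (A |: G2) G1 ->
  exclusive G1 G2 = exclusive G2 G1.
Proof.
move=> AnG1 AnG2 eq1 eq2.
by rewrite (exclusive_split AnG1 AnG2) (exclusive_split AnG2 AnG1) eq1 eq2 addnC.
Qed.

Lemma exclusive_sym_extend A G1 G2 : A \notin G1 -> A \notin G2 ->
  exclusive G1 G2 = exclusive G2 G1 ->
  exclusive G1 (A |: G2) = exclusive (A |: G2) G1 ->
  exclusive (A |: G1) G2 = exclusive G2 (A |: G1).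
Proof.
move=> AnG1 AnG2 eq0 eq2; apply/eqP; rewrite -(eqn_add2r (exclusive G1 (A |: G2))).
by rewrite -(exclusive_split AnG1 AnG2) eq0 eq2 addnC (exclusive_split AnG2 AnG1).
Qed.

Lemma disjoint_setU1l A G1 G2 :
  [disjoint A |: G1 & G2] = (A \notin G2) && [disjoint G1 & G2].
Proof. by rewrite -!setI_eq0 setIUl setU_eq0 !setI_eq0 disjoints1. Qed.

Lemma disjoint_setU1r A G1 G2 :
  [disjoint G1 & A |: G2] = (A \notin G1) && [disjoint G1 & G2].
Proof. by rewrite -!setI_eq0 setIUr setU_eq0 [G1 :&: _]setIC !setI_eq0 disjoints1. Qed.

End Exclusive.

Section SetSystem.
Variables (T : finType) (F : {set {set T}}).
Implicit Types (A : {set T}) (G H K : {set {set T}}).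

Definition exclusive_sym :=
  forall G1 G2, G1 \subset F -> G2 \subset F -> G1 != set0 -> G2 != set0 ->
    [disjoint G1 & G2] -> exclusive G1 G2 = exclusive G2 G1.

Definition exclusive_sym_cover :=
  forall G1 G2, G1 \subset F -> G2 \subset F -> G1 != set0 -> G2 != set0 ->
    [disjoint G1 & G2] -> G1 :|: G2 = F -> exclusive G1 G2 = exclusive G2 G1.

Lemma HKE_exclusive_set1 A G : HKE F -> A \in F -> G \subset F -> G != set0 ->
  A \notin G -> exclusive [set A] G = exclusive G [set A].
Proof.
case=> alpha [_ cupcapF] AF GF Gn0 AnG; have := cupcap_setU1 AnG.
by rewrite /cupcap !cupcapF ?subUset ?sub1set ?AF ?setU1_neq0 //; lia.
Qed.

Lemma HKE_exclusive_sym : HKE F -> exclusive_sym.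
Proof.
move=> hkeF G1; elim/finset_ind: G1 => [G2 _ _|A G1 AnG1 IH G2]; first by rewrite eqxx.
rewrite subUset sub1set disjoint_setU1l => /andP[AF G1F] G2F _ G2n0 /andP[AnG2 dG].
have [-> | G1n0] := eqVneq G1 set0; first by rewrite setU0; apply: HKE_exclusive_set1.
apply: exclusive_sym_extend => //; first exact: IH.
by apply: IH; rewrite ?subUset ?sub1set ?AF ?setU1_neq0 ?disjoint_setU1r ?AnG1.
Qed.

Lemma exclusive_sym_of_cover : exclusive_sym_cover -> exclusive_sym.
Proof.
move=> symF.
suff sym_compl K : K \subset F -> forall G1 G2, G1 != set0 -> G2 != set0 ->
    [disjoint G1 & G2] -> G1 :|: G2 = F :\: K -> exclusive G1 G2 = exclusive G2 G1.
  move=> G1 G2 G1F G2F G1n0 G2n0 dG; apply: (sym_compl (F :\: (G1 :|: G2))) => //.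
    exact: subsetDl.
  by rewrite setDDr setDv set0U; apply/esym/setIidPr; rewrite subUset G1F G2F.
elim/finset_ind: K => [_ | A K AnK IH].
  move=> G1 G2 G1n0 G2n0 dG; rewrite setD0 => UG.
  by apply: symF; rewrite -?UG ?subsetUl ?subsetUr.
rewrite subUset sub1set => /andP[AF KF] G1 G2 G1n0 G2n0 dG UG.
have : A \notin G1 :|: G2 by rewrite UG inE setU11.
rewrite inE negb_or => /andP[AnG1 AnG2].
have UAG : A |: (G1 :|: G2) = F :\: K.
  apply/setP=> B; rewrite UG !inE; case: eqP => // ->; by rewrite AnK AF.
apply: (exclusive_sym_merge AnG1 AnG2); apply: IH; rewrite ?setU1_neq0 //.
- by rewrite disjoint_setU1l AnG2.
- by rewrite -setUA UAG.
- by rewrite disjoint_setU1r AnG1.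
- by rewrite setUCA UAG.
Qed.

Lemma exclusive_sym_cupcap_setU1 A G : exclusive_sym -> A \in F -> G \subset F ->
  G != set0 -> cupcap (A |: G) = cupcap G.
Proof.
move=> symF AF GF Gn0; have [AG | AnG] := boolP (A \in G).
  by rewrite (setUidPr _) // sub1set.
have := cupcap_setU1 AnG.
by rewrite (symF [set A] G) ?sub1set ?set1_neq0 ?disjoints1 //; lia.
Qed.

Lemma exclusive_sym_cupcap G : exclusive_sym -> G \subset F -> G != set0 ->
  cupcap G = cupcap F.
Proof.
move=> symF GF Gn0.
suff cupcapU H : H \subset F -> cupcap (G :|: H) = cupcap G.
  by rewrite -(cupcapU F) // (setUidPr GF).
elim/finset_ind: H => [_ | A H AnH IH]; first by rewrite setU0.
rewrite subUset sub1set => /andP[AF HF].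
rewrite setUCA exclusive_sym_cupcap_setU1 ?IH //; first by rewrite subUset GF.
exact: subset_neq0 (subsetUl G H) Gn0.
Qed.

Lemma HKE_of_exclusive_sym : set_system F -> exclusive_sym -> HKE F.
Proof.
case=> /set0Pn[A0 A0F] set0nF symF; exists #|A0|; split.
  by rewrite card_gt0; apply: contraNneq set0nF => <-.
move=> G GF Gn0; rewrite -/(cupcap G) -cupcap_set1.
by rewrite !exclusive_sym_cupcap ?sub1set ?set1_neq0.
Qed.

End SetSystem.

Theorem theorem2p5 (T : finType) (F : {set {set T}}) :
  set_system F ->
  (HKE F <->
   (forall G1 G2 : {set {set T}}, G1 \subset F -> G2 \subset F ->
      G1 != set0 -> G2 != set0 -> [disjoint G1 & G2] ->
      #|bigI G1 :\: bigU G2| = #|bigI G2 :\: bigU G1|)) /\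
  (HKE F <->
   (forall G1 G2 : {set {set T}}, G1 \subset F -> G2 \subset F ->
      G1 != set0 -> G2 != set0 -> [disjoint G1 & G2] -> G1 :|: G2 = F ->
      #|bigI G1 :\: bigU G2| = #|bigI G2 :\: bigU G1|)).
Proof.
move=> sysF; split; split.
- exact: HKE_exclusive_sym.
- exact: HKE_of_exclusive_sym.
- move=> /HKE_exclusive_sym symF G1 G2 G1F G2F G1n0 G2n0 dG _; exact: symF.
- by move=> /exclusive_sym_of_cover; apply: HKE_of_exclusive_sym.
Qed.
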